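(* Let $\pi$ be a prior on $(P,\theta)\in\mathcal P\times\mathbb R^p$ satisfying the following condition (MD): the conditional prior of $(Y(P),\theta)$ given $(X(P),W(P))$ is absolutely continuous with full support and a continuous density for all values of $(X(P),W(P))$; and for all $P\in\mathcal P$ and $\theta\in\mathbb R^p$, the posterior density of $\theta$ given $P$ satisfies \[ \pi(\theta\mid P)=h\bigl(Q_W(\theta;P),W(P),\theta\bigr)\,c(P) \] for some non-negative function $h$ that is twice continuously differentiable in its first argument and continuously differentiable in $\theta$, where $c(P)$ is the normalizing constant making $\int\pi(\theta\mid P)\,d\theta=1$. Then for all $P\in\mathcal P$, \[ \pi(\theta\mid P)=\pi\bigl(\theta\mid W(P),X(P),Y(P)\bigr), \] i.e. the posterior for $\theta$ depends on the data distribution $P$ only through $(W(P),X(P),Y(P))$.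
   Context: Let $\mathcal D$ be a set and $\mathcal P$ a set of probability distributions on $\mathcal D$; the distribution $P\in\mathcal P$ is observed. Fix integers $k>p\ge1$. Let $Y:\mathcal P\to\mathbb R^k$ and $X:\mathcal P\to\mathbb R^{k\times p}$ be known functions with $X(P)$ of full column rank for every $P$, and let $W(P)$ be a known symmetric positive definite $k\times k$ matrix depending on $P$. For $\theta\in\mathbb R^p$ define the moments $g(\theta;P)=Y(P)-X(P)\theta$ and the minimum distance objective $Q_W(\theta;P)=g(\theta;P)'W(P)g(\theta;P)$. A prior $\pi$ is a joint distribution over pairs $(P,\theta)$, and $\pi(\theta\mid P)$ denotes the posterior density of $\theta$ given $P$. *)

From HB Require Import structures.
From mathcomp Require Import all_boot all_order all_algebra.
From mathcomp Require Import all_classical all_reals all_analysis.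
Set Implicit Arguments. Unset Strict Implicit. Unset Printing Implicit Defensive.
Import Order.TTheory GRing.Theory Num.Theory.
Import numFieldNormedType.Exports.
Local Open Scope classical_set_scope.
Local Open Scope ring_scope.

(* Coordinates: R^n is represented measure-theoretically by n.-tuple R (with the
   product = Borel sigma-algebra of the library) and algebraically /
   topologically by column vectors 'cV[R]_n. *)
Definition tup2cv (R : realType) (n : nat) (t : n.-tuple R) : 'cV[R]_n :=
  \col_i tnth t i.
Definition cv2tup (R : realType) (n : nat) (v : 'cV[R]_n) : n.-tuple R :=
  [tuple v i 0 | i < n].

(* Lebesgue integral over R^n of a function (used for non-negative functions),
   as the iterated one-dimensional Lebesgue integral (Tonelli). *)
Fixpoint leb_int (R : realType) (n : nat) : (n.-tuple R -> \bar R) -> \bar R :=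
  match n return (n.-tuple R -> \bar R) -> \bar R with
  | 0 => fun f => f [tuple]
  | m.+1 => fun f =>
      (\int[@lebesgue_measure R]_x leb_int (fun t : m.-tuple R => f [tuple of x :: t]))%E
  end.

Definition sym_posdef (R : realType) (n : nat) (A : 'M[R]_n) : Prop :=
  A^T = A /\ forall v : 'cV[R]_n, v != 0 -> 0 < (v^T *m A *m v) 0 0.

Definition gmom (R : realType) (T : Type) (k p : nat)
  (Y : T -> 'cV[R]_k) (X : T -> 'M[R]_(k, p)) (P : T) (th : 'cV[R]_p) : 'cV[R]_k :=
  Y P - X P *m th.
Definition QW (R : realType) (T : Type) (k p : nat)
  (Y : T -> 'cV[R]_k) (X : T -> 'M[R]_(k, p)) (W : T -> 'M[R]_k)
  (th : 'cV[R]_p) (P : T) : R :=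
  ((gmom Y X P th)^T *m W P *m gmom Y X P th) 0 0.

(* post is (a version of) the posterior density pi(theta | P) w.r.t. Lebesgue
   measure on R^p, for the joint prior pi on (P, theta). *)
Definition is_posterior_density (R : realType) (d : measure_display)
  (Pset : measurableType d) (p : nat)
  (pi : probability (Pset * p.-tuple R)%type R) (post : Pset -> 'cV[R]_p -> R) : Prop :=
  (forall P th, 0 <= post P th) /\
  forall (A : set Pset) (B : set (p.-tuple R)), measurable A -> measurable B ->
    pi (A `*` B) =
    (\int[pi]_(z in A `*` [set: p.-tuple R])
       leb_int (fun t : p.-tuple R => (\1_B t * post z.1 (tup2cv t))%:E))%E.

(* f is a conditional density of (Y(P), theta) given (X(P), W(P)) under pi:
   for every event A in sigma(X, W) and every measurable E in R^k x R^p,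
   pi(P in A, (Y(P), theta) in E) = int_A  int_E f(X(P),W(P))(y,theta) dy dtheta dpi(P). *)
Definition is_cond_density_YT (R : realType) (d : measure_display)
  (Pset : measurableType d) (k p : nat)
  (pi : probability (Pset * p.-tuple R)%type R)
  (Y : Pset -> 'cV[R]_k) (X : Pset -> 'M[R]_(k, p)) (W : Pset -> 'M[R]_k)
  (f : 'M[R]_(k, p) -> 'M[R]_k -> 'cV[R]_k -> 'cV[R]_p -> R) : Prop :=
  (forall x w y th, 0 <= f x w y th) /\
  forall (D : set ('M[R]_(k, p) * 'M[R]_k)),
    <<s [set: ('M[R]_(k, p) * 'M[R]_k)%type], open >> D ->
    measurable [set P | D (X P, W P)] ->
    forall E : set (k.-tuple R * p.-tuple R), measurable E ->
      pi [set z | D (X z.1, W z.1) /\ E (cv2tup (Y z.1), z.2)] =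
      (\int[pi]_(z in [set P | D (X P, W P)] `*` [set: p.-tuple R])
         leb_int (fun y : k.-tuple R => leb_int (fun t : p.-tuple R =>
            (\1_E (y, t) * f (X z.1) (W z.1) (tup2cv y) (tup2cv t))%:E)))%E.

Definition full_support_density (R : realType) (k p : nat)
  (g : 'cV[R]_k -> 'cV[R]_p -> R) : Prop :=
  forall U : set ('cV[R]_k * 'cV[R]_p), open U -> U !=set0 ->
    (0 < leb_int (fun y : k.-tuple R => leb_int (fun t : p.-tuple R =>
            (\1_U (tup2cv y, tup2cv t) * g (tup2cv y) (tup2cv t))%:E)))%E.

Definition C2_real (R : realType) (g : R -> R) : Prop :=
  (forall q, derivable g q 1) /\ (forall q, derivable (derive1 g) q 1) /\
  continuous (derive1 (derive1 g)).

Definition C1_vec (R : realType) (p : nat) (g : 'cV[R]_p -> R) : Prop :=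
  (forall th, differentiable g th) /\
  (forall v : 'cV[R]_p, continuous (fun th => 'D_v g th)).

From HB Require Import structures.
From mathcomp Require Import all_boot all_order all_algebra.
From mathcomp Require Import all_classical all_reals all_analysis.
Set Implicit Arguments.
Unset Strict Implicit.
Unset Printing Implicit Defensive.
Import Order.TTheory GRing.Theory Num.Theory.
Import numFieldNormedType.Exports.
Local Open Scope classical_set_scope.
Local Open Scope ring_scope.

(* Only the factorization and the normalization in (MD) matter.  If (W, X, Y)
   agree at P and P', then so do the kernels th |-> h (Q_W(th; P)) (W P) th;
   the two posteriors are this kernel times c P and c P', and both integrate
   to 1, which forces c P = c P' (once the kernel is not identically 0). *)

Section integral_scaling.
Local Open Scope ereal_scope.
Context d (T : measurableType d) (R : realType).
Variable mu : {measure set T -> \bar R}.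
Import HBNNSimple.

(* Unlike the library's ge0_integralZl, no measurability of f is assumed: the
   integrands of leb_int need not be measurable. *)
Lemma ge0_integralTZl_le (f : T -> \bar R) (k : R) : (0 < k)%R ->
  (forall x, 0 <= f x) -> \int[mu]_x (k%:E * f x) <= k%:E * \int[mu]_x f x.
Proof.
move=> k_gt0 f_ge0.
have kf_ge0 x : 0 <= k%:E * f x by rewrite mule_ge0 // lee_fin ltW.
rewrite ge0_integralTE // ge0_integralTE //.
apply: ge_ereal_sup => _ [s /= s_le <-].
have kV_ge0 : (0 <= k^-1)%R by rewrite invr_ge0 ltW.
pose s' := scale_nnsfun s kV_ge0.
have -> : sintegral mu s = k%:E * sintegral mu s'.
  rewrite (_ : s' = (cst k^-1 \* s)%R :> (T -> R)) // sintegralrM.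
  by rewrite muleA -EFinM mulfV ?gt_eqF // mul1e.
apply: lee_wpmul2l; first by rewrite lee_fin ltW.
apply: ereal_sup_ubound; exists s' => //= x.
rewrite EFinM -[f x]mul1e -(mulVf (lt0r_neq0 k_gt0)) EFinM -muleA.
by apply: lee_wpmul2l => //; rewrite lee_fin.
Qed.

Lemma ge0_integralTZl (f : T -> \bar R) (k : R) : (0 <= k)%R ->
  (forall x, 0 <= f x) -> \int[mu]_x (k%:E * f x) = k%:E * \int[mu]_x f x.
Proof.
rewrite le_eqVlt => /predU1P[<- _|k_gt0 f_ge0].
  by rewrite mul0e; under eq_integral do rewrite mul0e; rewrite integral0.
apply/eqP; rewrite eq_le ge0_integralTZl_le //=.
have kV_gt0 : (0 < k^-1)%R by rewrite invr_gt0.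
have kf_ge0 x : 0 <= k%:E * f x by rewrite mule_ge0 // lee_fin ltW.
have := ge0_integralTZl_le kV_gt0 kf_ge0.
under eq_integral do rewrite muleA -EFinM mulVf ?lt0r_neq0 // mul1e.
have k_ge0 : 0 <= k%:E by rewrite lee_fin ltW.
move=> /(lee_wpmul2l k_ge0) /le_trans; apply.
by rewrite muleA -EFinM mulfV ?gt_eqF // mul1e.
Qed.

End integral_scaling.

Section leb_int.
Local Open Scope ereal_scope.
Variable R : realType.

Lemma leb_int_ge0 (n : nat) (f : n.-tuple R -> \bar R) :
  (forall t, 0 <= f t) -> 0 <= leb_int f.
Proof.
elim: n f => [|n IHn] f f_ge0 /=; first exact: f_ge0.
by apply: integral_ge0 => x _; apply: IHn.
Qed.

Lemma leb_intZl (n : nat) (f : n.-tuple R -> \bar R) (k : R) : (0 <= k)%R ->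
  (forall t, 0 <= f t) -> leb_int (fun t => k%:E * f t) = k%:E * leb_int f.
Proof.
elim: n f => [|n IHn] f k_ge0 f_ge0 //=.
rewrite -ge0_integralTZl // => [|x]; last exact: leb_int_ge0.
by apply: eq_integral => x _; rewrite IHn.
Qed.

Lemma EFin_mule_eq1_inj (a b : R) (x : \bar R) :
  a%:E * x = 1 -> b%:E * x = 1 -> a = b.
Proof.
case: x => [r||] /=.
- rewrite -!EFinM => -[ar1] -[br1].
  have r_neq0 : r != 0%R.
    by apply: contra_eq_neq ar1 => ->; rewrite mulr0 eq_sym oner_neq0.
  by apply: (mulIf r_neq0); rewrite ar1 br1.
- by rewrite mulry; case: sgrP => _ /eqP;
    rewrite ?mul0e ?mul1e ?mulN1e // eqe eq_sym oner_eq0.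
- by rewrite mulrNy; case: sgrP => _ /eqP;
    rewrite ?mul0e ?mul1e ?mulN1e // eqe eq_sym oner_eq0.
Qed.

Lemma normalizing_constant_unique (n : nat) (g : n.-tuple R -> R) (a b : R) :
  (forall t, 0 <= g t)%R -> (0 <= a)%R -> (0 <= b)%R ->
  leb_int (fun t => (g t * a)%:E) = 1 -> leb_int (fun t => (g t * b)%:E) = 1 ->
  a = b.
Proof.
move=> g_ge0 a_ge0 b_ge0.
have g_ge0E t : 0 <= (g t)%:E by rewrite lee_fin.
under eq_fun do rewrite mulrC EFinM; rewrite leb_intZl // => int_a.
under eq_fun do rewrite mulrC EFinM; rewrite leb_intZl // => int_b.
exact: EFin_mule_eq1_inj int_a int_b.
Qed.

End leb_int.

Lemma factorization_of_fiberwise_constant (T U V : Type) (v0 : V)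
    (key : T -> U) (f : T -> V) :
  (forall x y, key x = key y -> f x = f y) -> exists F : U -> V, f =1 F \o key.
Proof.
move=> f_key.
exists (fun u => if pselect (exists x, key x = u) is left ex
                 then f (projT1 (cid ex)) else v0).
move=> x /=; case: pselect => [ex|nex]; last by exfalso; apply: nex; exists x.
by case: (cid ex) => y /= /esym /f_key.
Qed.

Section posterior_through_moments.
Variables (R : realType) (d : measure_display) (Pset : measurableType d).
Variables (k p : nat) (Y : Pset -> 'cV[R]_k) (X : Pset -> 'M[R]_(k, p)).
Variables (W : Pset -> 'M[R]_k) (post : Pset -> 'cV[R]_p -> R).
Variables (h : R -> 'M[R]_k -> 'cV[R]_p -> R) (c : Pset -> R).
Hypothesis post_ge0 : forall P th, 0 <= post P th.
Hypothesis h_ge0 : forall q w th, 0 <= h q w th.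
Hypothesis hform : forall P th, post P th = h (QW Y X W th P) (W P) th * c P.
Hypothesis hnorm :
  forall P, leb_int (fun t : p.-tuple R => (post P (tup2cv t))%:E) = 1%E.

Lemma posterior_eq_of_moments_eq P P' :
  W P = W P' -> X P = X P' -> Y P = Y P' -> post P =1 post P'.
Proof.
move=> eW eX eY.
pose g th := h (QW Y X W th P) (W P) th.
have postP th : post P th = g th * c P by rewrite hform.
have postP' th : post P' th = g th * c P'.
  by rewrite hform /g /QW /gmom eW eX eY.
have [g0 | /existsNP[t0 /eqP gt0_neq0]] := pselect (forall th, g th = 0).
  by move=> th; rewrite postP postP' g0 !mul0r.
have gt0_gt0 : 0 < g t0 by rewrite lt0r gt0_neq0 h_ge0.
have c_ge0 Q : post Q t0 = g t0 * c Q -> 0 <= c Q.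
  by move=> postQ; rewrite -(pmulr_rge0 _ gt0_gt0) -postQ post_ge0.
have normalized Q : (forall th, post Q th = g th * c Q) ->
    leb_int (fun t : p.-tuple R => (g (tup2cv t) * c Q)%:E) = 1%E.
  move=> postQ; rewrite -(hnorm Q); congr leb_int.
  by apply/funext => t; rewrite postQ.
have cPP' : c P = c P'.
  apply: (@normalizing_constant_unique _ _ (g \o @tup2cv R p)).
  - by move=> t; apply: h_ge0.
  - exact: c_ge0.
  - exact: c_ge0.
  - exact: normalized.
  - exact: normalized.
by move=> th; rewrite postP postP' cPP'.
Qed.

End posterior_through_moments.

Theorem lemma1 (R : realType) (d : measure_display) (Pset : measurableType d)
  (k p : nat) (hpk : (1 <= p < k)%N)
  (Y : Pset -> 'cV[R]_k) (X : Pset -> 'M[R]_(k, p)) (W : Pset -> 'M[R]_k)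
  (hX : forall P, \rank (X P) = p)
  (hW : forall P, sym_posdef (W P))
  (pi : probability (Pset * p.-tuple R)%type R)
  (post : Pset -> 'cV[R]_p -> R)
  (hpost : is_posterior_density pi post)
  (* (MD), first part *)
  (hMD1 : exists f : 'M[R]_(k, p) -> 'M[R]_k -> 'cV[R]_k -> 'cV[R]_p -> R,
      is_cond_density_YT pi Y X W f /\
      forall P, continuous (fun yt : 'cV[R]_k * 'cV[R]_p => f (X P) (W P) yt.1 yt.2) /\
                full_support_density (f (X P) (W P)))
  (* (MD), second part *)
  (h : R -> 'M[R]_k -> 'cV[R]_p -> R) (c : Pset -> R)
  (h_ge0 : forall q w th, 0 <= h q w th)
  (h_C2 : forall w th, C2_real (fun q => h q w th))
  (h_C1 : forall q w, C1_vec (fun th => h q w th))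
  (hform : forall P th, post P th = h (QW Y X W th P) (W P) th * c P)
  (hnorm : forall P, leb_int (fun t : p.-tuple R => (post P (tup2cv t))%:E) = 1%E) :
  exists F : 'M[R]_k -> 'M[R]_(k, p) -> 'cV[R]_k -> 'cV[R]_p -> R,
    forall P th, post P th = F (W P) (X P) (Y P) th.
Proof.
have post_fiber P P' : (W P, X P, Y P) = (W P', X P', Y P') -> post P = post P'.
  move=> [eW eX eY]; apply/funext.
  exact: posterior_eq_of_moments_eq hpost.1 h_ge0 hform hnorm _ _ eW eX eY.
have [F postF] := factorization_of_fiberwise_constant (fun _ => 0) post_fiber.
by exists (fun w x y => F (w, x, y)) => P th; rewrite postF.
Qed.
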